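(* Let $\Omega=(a,b)\subset\mathbb{R}$ be a bounded interval with $a=kh$, $b=lh$ for a mesh size $h>0$ and integers $k,l$ with $l-k>1$. Then $$\sum_{x\in\Omega_h}\frac{u(x)^2}{\operatorname{dist}(x,\partial\Omega_h)^2}\le4\sum_{x\in\overline{\Omega}_h\setminus\partial^+\Omega_h}\big(D_h^+u(x)\big)^2$$ for all $u\in W_0^{1,2}(\overline{\Omega}_h)$.
   Context: $\overline{\Omega}_h=[a,b]\cap h\mathbb{Z}$, $\Omega_h=(a,b)\cap h\mathbb{Z}$, $\partial\Omega_h=\{a,b\}$, $\partial^+\Omega_h=\{b\}$, $D_h^+u(x)=\frac{u(x+h)-u(x)}{h}$. $W_0^{1,2}(\overline{\Omega}_h)$ is the set of $u:\overline{\Omega}_h\to\mathbb{R}$ with $u(a)=u(b)=0$. $\operatorname{dist}(x,\partial\Omega_h)=\min\{x-a,b-x\}$. *)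

From Stdlib Require Import Reals Lra Lia ZArith.
Open Scope R_scope.

(* Finite sum over integers j with m <= j <= n (empty, i.e. 0, if n < m). *)
Definition zsum (m n : Z) (f : Z -> R) : R :=
  if (n <? m)%Z then 0
  else sum_f_R0 (fun i => f (m + Z.of_nat i)%Z) (Z.to_nat (n - m)).

Definition Dhp (h : R) (u : R -> R) (x : R) : R := (u (x + h) - u x) / h.

Definition distb (a b x : R) : R := Rmin (x - a) (b - x).

(* On a half-line, the one-step estimate
     (v_(i+1) / (i+1))^2 + 2 v_(i+1)^2 / (i+1) <= 4 (v_(i+1) - v_i)^2 + 2 v_i^2 / i,
   a sum of squares in a = v_(i+1) / (i+1) and b = v_i / i, telescopes into the
   discrete Hardy inequality with constant 4.  On a segment the weight
   1 / dist^2 is 1 / i^2 left of the midpoint and 1 / (n - i)^2 right of it;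
   running the estimate from both ends and gluing the two potentials at the
   midpoint keeps the constant 4. *)

From Stdlib Require Import Reals Lra Lia ZArith.
Open Scope R_scope.

Lemma mul_sqr_div_nonneg (c x z : R) : 0 <= c -> 0 <= z -> 0 <= c * x ^ 2 / z.
Proof.
  intros Hc Hz; unfold Rdiv; apply Rmult_le_pos; [apply Rmult_le_pos, pow2_ge_0; exact Hc |].
  destruct (Req_dec z 0) as [-> | Hz0].
  - rewrite Rinv_0; lra.
  - left; apply Rinv_0_lt_compat; lra.
Qed.

Lemma Rmin_mult_r (a b h : R) : 0 < h -> Rmin (a * h) (b * h) = Rmin a b * h.
Proof.
  intros Hh; unfold Rmin.
  destruct (Rle_dec (a * h) (b * h)), (Rle_dec a b); nra.
Qed.

Lemma Rmin_INR_dist_l (m n : nat) : (2 * m <= n)%nat ->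
  Rmin (INR m) (INR n - INR m) = INR m.
Proof.
  intros Hmn; apply Rmin_left.
  apply le_INR in Hmn; rewrite mult_INR in Hmn; change (INR 2) with (1 + 1) in Hmn; lra.
Qed.

Lemma Rmin_INR_dist_r (m n : nat) : (n < 2 * m)%nat ->
  Rmin (INR m) (INR n - INR m) = INR n - INR m.
Proof.
  intros Hmn; apply Rmin_right.
  apply lt_INR in Hmn; rewrite mult_INR in Hmn; change (INR 2) with (1 + 1) in Hmn; lra.
Qed.

Lemma sum_f_R0_telescope_le (F G Phi : nat -> R) (N : nat) :
  (forall i, (i <= N)%nat -> F i <= G i + Phi i - Phi (S i)) ->
  sum_f_R0 F N <= sum_f_R0 G N + Phi 0%nat - Phi (S N).
Proof.
  induction N as [| N IH]; intros HF; simpl.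
  - apply HF; lia.
  - assert (IHN := IH (fun i Hi => HF i ltac:(lia))).
    assert (HN := HF (S N) ltac:(lia)).
    lra.
Qed.

(* For [j = 0] the term [2 y^2 / j] is Rocq's junk value [0], hence [y = 0]. *)
Lemma hardy_step (j x y : R) : 0 <= j -> (j = 0 -> y = 0) ->
  (x / (j + 1)) ^ 2 + 2 * x ^ 2 / (j + 1) <= 4 * (x - y) ^ 2 + 2 * y ^ 2 / j.
Proof.
  intros Hj Hy.
  destruct (Req_dec j 0) as [-> | Hj0].
  - rewrite (Hy eq_refl).
    replace (2 * 0 ^ 2 / 0) with 0 by (unfold Rdiv; ring).
    replace (x / (0 + 1)) with x by field.
    replace (2 * x ^ 2 / (0 + 1)) with (2 * x ^ 2) by field.
    nra.
  - set (a := x / (j + 1)); set (b := y / j).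
    assert (Ex : x = (j + 1) * a) by (unfold a; field; lra).
    assert (Ey : y = j * b) by (unfold b; field; lra).
    clearbody a b; subst x y.
    replace ((j + 1) * a / (j + 1)) with a by (field; lra).
    replace (2 * ((j + 1) * a) ^ 2 / (j + 1)) with (2 * (j + 1) * a ^ 2)
      by (field; lra).
    replace (2 * (j * b) ^ 2 / j) with (2 * j * b ^ 2) by (field; lra).
    assert (SOS : 4 * ((j + 1) * a - j * b) ^ 2 + 2 * j * b ^ 2
                  - (a ^ 2 + 2 * (j + 1) * a ^ 2)
                  = 2 * (j * (a - b) ^ 2) + (a - 2 * ((j + 1) * a - j * b)) ^ 2)
      by ring.
    assert (0 <= j * (a - b) ^ 2) by (apply Rmult_le_pos; [lra | apply pow2_ge_0]).
    pose proof (pow2_ge_0 (a - 2 * ((j + 1) * a - j * b))).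
    lra.
Qed.

Section SegmentHardy.

Variable v : nat -> R.
Variable p : nat.
Let n := S (S p).
Hypothesis v_left : v 0%nat = 0.
Hypothesis v_right : v n = 0.

Let D (i : nat) : R := v (S i) - v i.

(* Left of the midpoint the step at [i] charges [D i], right of it [D (S i)];
   absorbing [4 D i ^ 2] into the left potential makes every step charge
   [D (S i)], so that only [D 0] is left over, in [potential 0]. *)
Let potential (i : nat) : R :=
  if (2 * S i <=? n)%nat then 2 * v i ^ 2 / INR i + 4 * D i ^ 2
  else - (2 * v (S i) ^ 2 / (INR n - INR (S i))).

Lemma hardy_left_step (i : nat) :
  (v (S i) / INR (S i)) ^ 2
  <= 4 * D i ^ 2 + 2 * v i ^ 2 / INR i - 2 * v (S i) ^ 2 / INR (S i).
Proof.
  assert (Hi0 : INR i = 0 -> v i = 0).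
  { destruct i as [| i]; [easy |].
    rewrite S_INR; pose proof (pos_INR i); lra. }
  pose proof (hardy_step (INR i) (v (S i)) (v i) (pos_INR i) Hi0).
  unfold D; rewrite S_INR; lra.
Qed.

Lemma hardy_right_step (i : nat) : (i <= p)%nat ->
  (v (S i) / (INR n - INR (S i))) ^ 2
  <= 4 * D (S i) ^ 2 + 2 * v (S (S i)) ^ 2 / (INR n - INR (S (S i)))
     - 2 * v (S i) ^ 2 / (INR n - INR (S i)).
Proof.
  intros Hip.
  assert (E1 : INR n - INR (S i) = INR (p - i) + 1).
  { unfold n; rewrite minus_INR by lia; rewrite !S_INR; ring. }
  assert (E2 : INR n - INR (S (S i)) = INR (p - i)).
  { unfold n; rewrite minus_INR by lia; rewrite !S_INR; ring. }
  assert (Hpi : INR (p - i) = 0 -> v (S (S i)) = 0).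
  { intros E; replace (S (S i)) with n; [exact v_right |].
    change 0 with (INR 0) in E; apply INR_eq in E; unfold n; lia. }
  pose proof (hardy_step (INR (p - i)) (v (S i)) (v (S (S i))) (pos_INR _) Hpi).
  rewrite E1, E2; unfold D.
  replace ((v (S (S i)) - v (S i)) ^ 2) with ((v (S i) - v (S (S i))) ^ 2) by ring.
  lra.
Qed.

Lemma potential_step (i : nat) : (i <= p)%nat ->
  (v (S i) / Rmin (INR (S i)) (INR n - INR (S i))) ^ 2
  <= 4 * D (S i) ^ 2 + potential i - potential (S i).
Proof.
  intros Hip; unfold potential.
  destruct (Nat.leb_spec (2 * S i) n) as [Hl | Hr];
  destruct (Nat.leb_spec (2 * S (S i)) n) as [Hl' | Hr'].
  - rewrite Rmin_INR_dist_l by exact Hl.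
    pose proof (hardy_left_step i); lra.
  - rewrite Rmin_INR_dist_l by exact Hl.
    pose proof (hardy_left_step i).
    assert (0 <= 2 * v (S (S i)) ^ 2 / (INR n - INR (S (S i)))).
    { apply mul_sqr_div_nonneg; [lra |].
      rewrite <- minus_INR by (unfold n; lia); apply pos_INR. }
    assert (0 <= 2 * v (S i) ^ 2 / INR (S i)) by (apply mul_sqr_div_nonneg, pos_INR; lra).
    pose proof (pow2_ge_0 (D (S i))).
    lra.
  - lia.
  - rewrite Rmin_INR_dist_r by exact Hr.
    pose proof (hardy_right_step i Hip); lra.
Qed.

Lemma segment_hardy :
  sum_f_R0 (fun i => (v (S i) / Rmin (INR (S i)) (INR n - INR (S i))) ^ 2) p
  <= 4 * sum_f_R0 (fun i => D i ^ 2) (S p).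
Proof.
  eapply Rle_trans.
  { apply (sum_f_R0_telescope_le _ (fun i => D (S i) ^ 2 * 4) potential).
    intros i Hip; rewrite Rmult_comm; apply potential_step, Hip. }
  assert (P0 : potential 0 = 4 * D 0 ^ 2).
  { unfold potential; replace (2 * 1 <=? n)%nat with true
      by (symmetry; apply Nat.leb_le; unfold n; lia).
    rewrite v_left; unfold Rdiv; ring. }
  assert (Pn : potential (S p) = 0).
  { unfold potential; replace (2 * S (S p) <=? n)%nat with false
      by (symmetry; apply Nat.leb_gt; unfold n; lia).
    fold n; rewrite v_right; unfold Rdiv; ring. }
  rewrite <- scal_sum, P0, Pn, (decomp_sum _ (S p)) by lia.
  simpl pred; lra.
Qed.

End SegmentHardy.

Lemma zsum_nat (m : Z) (N : nat) (f : Z -> R) :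
  zsum m (m + Z.of_nat N) f = sum_f_R0 (fun i => f (m + Z.of_nat i)%Z) N.
Proof.
  unfold zsum.
  replace (m + Z.of_nat N <? m)%Z with false by (symmetry; apply Z.ltb_ge; lia).
  replace (Z.to_nat (m + Z.of_nat N - m)) with N by lia.
  reflexivity.
Qed.

Lemma distb_grid_sqr (h x : R) (k : Z) (n j : nat) : 0 < h -> (0 < j < n)%nat ->
  x ^ 2 / distb (IZR k * h) (IZR (k + Z.of_nat n) * h) (IZR (k + Z.of_nat j) * h) ^ 2
  = (x / Rmin (INR j) (INR n - INR j)) ^ 2 * / h ^ 2.
Proof.
  intros Hh Hj.
  assert (0 < Rmin (INR j) (INR n - INR j)).
  { apply Rmin_glb_lt; [apply lt_0_INR; lia |].
    rewrite <- minus_INR by lia; apply lt_0_INR; lia. }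
  unfold distb; rewrite !plus_IZR, <- !INR_IZR_INZ.
  replace ((IZR k + INR j) * h - IZR k * h) with (INR j * h) by ring.
  replace ((IZR k + INR n) * h - (IZR k + INR j) * h) with ((INR n - INR j) * h)
    by ring.
  rewrite Rmin_mult_r by exact Hh.
  field; lra.
Qed.

Lemma Dhp_grid_sqr (h : R) (u : R -> R) (z : Z) : 0 < h ->
  Dhp h u (IZR z * h) ^ 2 = (u (IZR (z + 1) * h) - u (IZR z * h)) ^ 2 * / h ^ 2.
Proof.
  intros Hh; unfold Dhp; rewrite plus_IZR.
  replace ((IZR z + 1) * h) with (IZR z * h + h) by ring.
  field; lra.
Qed.

Theorem mainTheorem19 (h : R) (k l : Z) (u : R -> R) :
  0 < h -> (l - k > 1)%Z ->
  u (IZR k * h) = 0 -> u (IZR l * h) = 0 ->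
  zsum (k + 1) (l - 1)
    (fun j => (u (IZR j * h)) ^ 2 / (distb (IZR k * h) (IZR l * h) (IZR j * h)) ^ 2)
  <= 4 * zsum k (l - 1) (fun j => (Dhp h u (IZR j * h)) ^ 2).
Proof.
  intros Hh Hkl Hk Hl.
  set (p := (Z.to_nat (l - k) - 2)%nat).
  assert (El : l = (k + Z.of_nat (S (S p)))%Z) by (unfold p; lia).
  set (v := fun j : nat => u (IZR (k + Z.of_nat j) * h)).
  replace (l - 1)%Z with (k + 1 + Z.of_nat p)%Z at 1 by (unfold p; lia).
  replace (l - 1)%Z with (k + Z.of_nat (S p))%Z by (unfold p; lia).
  rewrite !zsum_nat.
  assert (weights : forall i, (i <= p)%nat ->
    u (IZR (k + 1 + Z.of_nat i) * h) ^ 2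
      / distb (IZR k * h) (IZR l * h) (IZR (k + 1 + Z.of_nat i) * h) ^ 2
    = (v (S i) / Rmin (INR (S i)) (INR (S (S p)) - INR (S i))) ^ 2 * / h ^ 2).
  { intros i Hip; replace (k + 1 + Z.of_nat i)%Z with (k + Z.of_nat (S i))%Z by lia.
    rewrite El; apply distb_grid_sqr; [exact Hh | lia]. }
  assert (differences : forall i, (i <= S p)%nat ->
    Dhp h u (IZR (k + Z.of_nat i) * h) ^ 2 = (v (S i) - v i) ^ 2 * / h ^ 2).
  { intros i _; rewrite Dhp_grid_sqr by exact Hh; unfold v.
    now rewrite Nat2Z.inj_succ, <- Z.add_1_r, Z.add_assoc. }
  rewrite (sum_eq _ _ _ weights), (sum_eq _ _ _ differences), <- !scal_sum.
  assert (Hh2 : 0 < / h ^ 2) by (apply Rinv_0_lt_compat, pow_lt, Hh).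
  enough (sum_f_R0 (fun i => (v (S i) / Rmin (INR (S i)) (INR (S (S p)) - INR (S i))) ^ 2) p
          <= 4 * sum_f_R0 (fun i => (v (S i) - v i) ^ 2) (S p)) by nra.
  apply segment_hardy; unfold v.
  - now rewrite Z.add_0_r.
  - now rewrite <- El.
Qed.
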